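(* Let $A, B, C \in \mathbb{C}^{m\times n}$. The $\top$-Stein matrix equation $$X = A X^\top B + C$$ has a unique solution $X \in \mathbb{C}^{m\times n}$ if and only if both of the following conditions hold: (i) for every $\lambda \in \sigma(A^\top B)$ with $\lambda \neq -1$ and $\lambda \neq 0$, one has $\dfrac{1}{\lambda} \notin \sigma(A^\top B)$; (ii) if $-1 \in \sigma(A^\top B)$, then $-1$ is a simple eigenvalue of $A^\top B$.
   Context: For a square matrix $M$, $\sigma(M)$ denotes the set of eigenvalues of $M$. Here $X^\top$ denotes the (ordinary, non-conjugate) transpose of $X$, also for complex matrices. A simple eigenvalue is one of algebraic multiplicity one. *)

From HB Require Import structures.
From mathcomp Require Import all_boot all_order all_algebra.
From mathcomp Require Import complex.
From mathcomp Require Import reals.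
Set Implicit Arguments. Unset Strict Implicit. Unset Printing Implicit Defensive.
Import Order.TTheory GRing.Theory Num.Theory.
Local Open Scope ring_scope.

Definition spectrum (F : fieldType) (n : nat) (M : 'M[F]_n) (l : F) : Prop :=
  eigenvalue M l.

Definition alg_mult (F : fieldType) (n : nat) (M : 'M[F]_n) (l : F) : nat :=
  mup l (char_poly M).

Definition simple_eigenvalue (F : fieldType) (n : nat) (M : 'M[F]_n) (l : F) : Prop :=
  alg_mult M l = 1%N.

From HB Require Import structures.
From mathcomp Require Import all_boot all_order all_algebra.
From mathcomp Require Import complex.
From mathcomp Require Import reals.
From mathcomp Require Import ring.
Import Order.TTheory GRing.Theory Num.Theory.
Local Open Scope ring_scope.

Set Implicit Arguments. Unset Strict Implicit. Unset Printing Implicit Defensive.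

(* Uniqueness amounts to injectivity of the linear map X |-> X - A X^T B, and
   X = A X^T B has a nonzero solution iff P = P^T M does, for M = A^T B.
   If the spectral conditions fail, a solution P != 0 is built explicitly:
   v^T w + l w^T v from left eigenvectors v, w of M for l and 1/l, or
   v^T w - w^T v - (b/2) v^T v when v M = -v and w M = -w + b v.
   If they hold, P = P^T M gives P = M^T P M, hence
   q(M^T) P M^d = P (rev_d q)(M) for every q of degree at most d. Applied to
   the characteristic polynomial with its simple factor X + 1 split off, this
   gives P r(M) (M + 1) = 0 with r coprime to char M (the roots of r are the
   inverses of eigenvalues other than -1), so P (M + 1) = 0. Then P is skew,
   and a nonzero skew P with P M = -P makes -1 a multiple root of char M. *)

Lemma XsubCN1 (F : fieldType) : 'X - (-1)%:P = 'X + 1 :> {poly F}.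
Proof. by rewrite rmorphN1 opprK. Qed.

Section CharPoly.
Variable F : fieldType.

Lemma char_poly_trmx n (M : 'M[F]_n) : char_poly M^T = char_poly M.
Proof.
rewrite /char_poly -det_tr; congr (\det _); apply/matrixP => i j.
by rewrite !mxE eq_sym.
Qed.

Lemma char_poly_similar n (S M : 'M[F]_n) : S \in unitmx ->
  char_poly (S *m M *m invmx S) = char_poly M.
Proof.
move=> Su; rewrite /char_poly.
have -> : char_poly_mx (S *m M *m invmx S) =
    map_mx polyC S *m char_poly_mx M *m map_mx polyC (invmx S).
  rewrite /char_poly_mx mulmxBr mulmxBl -!map_mxM; congr (_ - _).
  by rewrite scalar_mxC -mulmxA -map_mxM mulmxV // map_mx1 mulmx1.
by rewrite !det_mulmx mulrAC -det_mulmx -map_mxM mulmxV // map_mx1 det1 mul1r.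
Qed.

Lemma char_poly_lblock m k (A : 'M[F]_m) (C : 'M[F]_(k, m)) (D : 'M[F]_k) :
  char_poly (block_mx A 0 C D) = char_poly A * char_poly D.
Proof.
rewrite /char_poly.
have -> : char_poly_mx (block_mx A 0 C D) =
    block_mx (char_poly_mx A) 0 (- map_mx polyC C) (char_poly_mx D).
  rewrite /char_poly_mx map_block_mx /= !map_mx0.
  by rewrite scalar_mx_block opp_block_mx add_block_mx !subr0 ?oppr0 add0r.
by rewrite det_lblock.
Qed.

Lemma char_poly_scalar1 (a : F) : char_poly (a%:M : 'M[F]_1) = 'X - a%:P.
Proof.
by rewrite char_poly_trig ?big_ord1 ?mxE //;
   apply/is_trig_mxP => i j; rewrite !ord1.
Qed.

Lemma unitmx_usubmx n (v : 'rV[F]_(1 + n)) : v != 0 ->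
  exists2 S : 'M[F]_(1 + n), S \in unitmx & usubmx S = v.
Proof.
move=> v0; have rk : \rank v = 1%N by rewrite rank_rV v0.
exists (block_mx (col_ebase v) 0 0 1%:M *m row_ebase v).
  rewrite unitmx_mul row_ebase_unit andbT unitmxE det_ublock det1 mulr1.
  by rewrite -unitmxE col_ebase_unit.
rewrite -mul_usub_mx block_mxEv col_mxKu.
have Hv := mulmx_ebase v; rewrite rk pid_mx_row in Hv.
by rewrite -[in RHS]Hv mul_mx_row mulmx1 mulmx0.
Qed.

Section LeftEigenBasis.
Variables (n : nat) (M S : 'M[F]_(1 + n)) (a : F).
Hypotheses (Su : S \in unitmx) (hS : usubmx S *m M = a *: usubmx S).
Let T := S *m M *m invmx S.

Lemma similar_lblock_left_eigen :
  T = block_mx a%:M 0 (dlsubmx T) (drsubmx T).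
Proof.
have uT : usubmx T = a *: row_mx 1%:M 0.
  rewrite /T -!mul_usub_mx hS -scalemxAl mul_usub_mx mulmxV //.
  by rewrite (scalar_mx_block 1 n) block_mxEv col_mxKu.
rewrite -[T in LHS]submxK; congr block_mx.
  by rewrite /ulsubmx uT scale_row_mx row_mxKl scalemx1.
by rewrite /ursubmx uT scale_row_mx row_mxKr scaler0.
Qed.

Lemma char_poly_left_eigen :
  char_poly M = ('X - a%:P) * char_poly (drsubmx T).
Proof.
rewrite -(char_poly_similar M Su) -/T {1}similar_lblock_left_eigen.
by rewrite char_poly_lblock char_poly_scalar1.
Qed.

End LeftEigenBasis.

End CharPoly.

Section ReciprocalPoly.
Variable F : fieldType.

(* [revp d f] is X^d f(1/X) when [size f <= d.+1]. *)
Definition revp (d : nat) (f : {poly F}) := \poly_(i < d.+1) f`_(d - i).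

Lemma horner_revp d (f : {poly F}) (x : F) : (size f <= d.+1)%N -> x != 0 ->
  (revp d f).[x] = x ^+ d * f.[x^-1].
Proof.
move=> hf x0; rewrite horner_poly (horner_coef_wide _ hf) mulr_sumr.
rewrite (reindex_inj rev_ord_inj) /=; apply: eq_bigr => i _.
have hi : (i <= d)%N by rewrite -ltnS.
rewrite subSS subKn // exprVn -[in x ^+ d](subnK hi) exprD.
by field; rewrite expf_neq0.
Qed.

Lemma horner0_revp d (f : {poly F}) : (revp d f).[0] = f`_d.
Proof. by rewrite horner_coef0 coef_poly subn0. Qed.

Section Congruence.
Variables (n : nat) (M P : 'M[F]_n.+1).
Hypothesis hP : P = M^T * P * M.

Lemma congr_fixed_expr k : M^T ^+ k * P * M ^+ k = P.
Proof.
elim: k => [|k IH]; first by rewrite !expr0 mul1r mulr1.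
have -> : M^T ^+ k.+1 * P * M ^+ k.+1 = M^T ^+ k * (M^T * P * M) * M ^+ k.
  by rewrite exprSr exprS !mulrA.
by rewrite -hP.
Qed.

Lemma horner_mx_trmx_congr d (f : {poly F}) : (size f <= d.+1)%N ->
  horner_mx M^T f * P * M ^+ d = P * horner_mx M (revp d f).
Proof.
move=> hf.
have fE : f = \poly_(i < d.+1) f`_i.
  apply/polyP => i; rewrite coef_poly; case: ltnP => // h.
  by rewrite nth_default // (leq_trans hf h).
rewrite /revp {1}fE !poly_def !rmorph_sum /= mulr_suml mulr_suml mulr_sumr.
rewrite (reindex_inj rev_ord_inj) /=; apply: eq_bigr => i _.
have hi : (i <= d)%N by rewrite -ltnS.
rewrite !linearZ /= !rmorphXn /= !horner_mx_X /= subSS.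
rewrite -!scalerAl -scalerAr; congr (_ *: _).
by rewrite -[in M ^+ d](subnK hi) exprD mulrA congr_fixed_expr.
Qed.

Lemma horner_mx_annihilator_revp (psi : {poly F}) d :
  (size psi <= d.+1)%N -> horner_mx M^T (psi * ('X + 1)) = 0 ->
  P * horner_mx M (revp d psi * ('X + 1)) = 0.
Proof.
move=> hs h0.
have e1 : (M^T + 1) * (P * M ^+ d.+1) = P * (M ^+ d * (M + 1)).
  rewrite mulrA exprS mulrA mulrDl mul1r mulrDl -hP mulrDl mulrDr mulr1.
  by rewrite -mulrA -exprS -exprSr mulrDr addrC.
have H := congr1 (fun X => X * P * M ^+ d.+1) h0.
rewrite /= !mul0r rmorphM /= rmorphD /= horner_mx_X rmorph1 in H.
rewrite rmorphM /= rmorphD /= horner_mx_X rmorph1 mulrA.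
by rewrite -(horner_mx_trmx_congr hs) -[RHS]H -!mulrA e1.
Qed.

End Congruence.

Lemma mul_add1_eq0_coprime n (M P : 'M[F]_n.+1) (r : {poly F}) :
  P * horner_mx M (r * ('X + 1)) = 0 -> coprimep r (char_poly M) ->
  P * (M + 1) = 0.
Proof.
move=> h /Bezout_eq1_coprimepP [[u1 u2] /= hu].
have -> : M + 1 =
    horner_mx M (r * ('X + 1) * u1 + ('X + 1) * u2 * char_poly M).
  rewrite (_ : _ + _ = ('X + 1) * (u1 * r + u2 * char_poly M)); last by ring.
  by rewrite hu mulr1 rmorphD /= horner_mx_X rmorph1.
rewrite rmorphD /= rmorphM /= [in X in _ + X]rmorphM /= Cayley_Hamilton.
by rewrite mulr0 addr0 mulrA h mul0r.
Qed.

Lemma char_poly_neg1_cofactor n (M : 'M[F]_n.+1) :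
  (eigenvalue M (-1) -> mup (-1) (char_poly M) = 1%N) ->
  exists (psi : {poly F}) d, [/\ size psi = d.+1, ~~ root psi (-1),
    char_poly M %| psi * ('X + 1) &
    forall z, root psi z -> root (char_poly M) z].
Proof.
move=> hii; have ch0 : char_poly M != 0 by rewrite monic_neq0 ?char_poly_monic.
case: (boolP (root (char_poly M) (-1))) => hr; last first.
  exists (char_poly M), n.+1; split=> //; first exact: size_char_poly.
  exact: dvdp_mulIl.
have [psi hpsi] := factor_theorem _ _ hr.
have psi0 : psi != 0 by apply: contraNneq ch0 => h; rewrite hpsi h mul0r.
exists psi, n; split.
- have := size_char_poly M; rewrite hpsi size_mul ?polyXsubC_eq0 //.
  by rewrite size_XsubC addn2 => -[].
- apply/negP => /factor_theorem [q hq].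
  have := hii (etrans (eigenvalue_root_char _ _) hr) => /eqP; apply/negP.
  rewrite neq_ltn -[(1 < _)%N]/(2 <= _)%N mup_geq // hpsi hq expr2 -mulrA.
  by rewrite dvdp_mull ?orbT.
- by rewrite hpsi XsubCN1.
- by move=> z rz; rewrite hpsi rootM rz.
Qed.

End ReciprocalPoly.

Lemma coprimep_revp_char_poly (K : closedFieldType) n (M : 'M[K]_n.+1)
    (psi : {poly K}) d :
  (forall l, eigenvalue M l -> l != -1 -> l != 0 -> ~ eigenvalue M l^-1) ->
  size psi = d.+1 -> ~~ root psi (-1) ->
  (forall z, root psi z -> root (char_poly M) z) ->
  coprimep (revp d psi) (char_poly M).
Proof.
move=> hi hs hr hz; apply: Pdiv.ClosedField.root_coprimep => x rx.
apply/negP => /eqP cx.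
have x0 : x != 0.
  apply: contraTneq rx => ->; rewrite /root horner0_revp.
  have : lead_coef psi != 0 by rewrite lead_coef_eq0 -size_poly_eq0 hs.
  by rewrite lead_coefE hs.
have rxi : root psi x^-1.
  move: rx; rewrite /root horner_revp ?hs // mulf_eq0 expf_eq0 (negPf x0).
  by rewrite andbF.
have xi1 : x^-1 != -1 by apply: contraNneq hr => <-.
have x1 : x != -1 by apply: contraNneq xi1 => ->; rewrite invrN invr1.
apply: (hi x) => //; first by rewrite eigenvalue_root_char /root cx.
by rewrite eigenvalue_root_char; apply: hz.
Qed.

Section FixedPoints.
Variable F : fieldType.

Lemma fixed_of_reciprocal_left_eigen n (M : 'M[F]_n) (v w : 'rV_n) l mu :
  v *m M = l *: v -> w *m M = mu *: w -> l * mu = 1 ->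
  let P := v^T *m w + l *: (w^T *m v) in P = P^T *m M.
Proof.
move=> hv hw hl /=.
rewrite linearD linearZ /= !trmx_mul !trmxK mulmxDl -scalemxAl -!mulmxA hv hw.
by rewrite -!scalemxAr scalerA hl scale1r addrC.
Qed.

Lemma reciprocal_left_eigen_neq0 n (v w : 'rV[F]_n) l :
  v != 0 -> w != 0 -> l != -1 -> v^T *m w + l *: (w^T *m v) != 0.
Proof.
move=> /rV0Pn [i vi] /rV0Pn [j wj] l1; apply/negP => /eqP hP.
have E a b : v 0 a * w 0 b + l * (w 0 a * v 0 b) = 0.
  by move/matrixP: hP => /(_ a b); rewrite !(mxE, big_ord1).
have l1' : 1 + l != 0 by rewrite addrC addr_eq0.
have diag_eq0 k : v 0 k * w 0 k = 0.
  apply/eqP; have := E k k; rewrite [w 0 k * _]mulrC -[X in X + _]mul1r.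
  by rewrite -mulrDl => /eqP; rewrite mulf_eq0 (negPf l1').
have wi : w 0 i = 0.
  by move/eqP: (diag_eq0 i); rewrite mulf_eq0 (negPf vi) => /eqP.
have vj : v 0 j = 0.
  by move/eqP: (diag_eq0 j); rewrite mulf_eq0 (negPf wj) orbF => /eqP.
have := E i j; rewrite wi vj !mul0r mulr0 addr0 => /eqP.
by rewrite mulf_eq0 (negPf vi) (negPf wj).
Qed.

Lemma fixed_of_reciprocal_eigenvalues n (M : 'M[F]_n) l :
  eigenvalue M l -> eigenvalue M l^-1 -> l != -1 -> l != 0 ->
  exists2 P : 'M_n, P = P^T *m M & P != 0.
Proof.
move=> /eigenvalueP [v hv v0] /eigenvalueP [w hw w0] l1 l0.
exists (v^T *m w + l *: (w^T *m v)); last exact: reciprocal_left_eigen_neq0.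
exact: fixed_of_reciprocal_left_eigen hv hw (mulfV l0).
Qed.

Lemma fixed_similar n (M S Q : 'M[F]_n) : S \in unitmx ->
  Q = Q^T *m (S *m M *m invmx S) -> Q != 0 ->
  let P := S^T *m Q *m S in P = P^T *m M /\ P != 0.
Proof.
move=> Su hQ Q0 /=; split.
  rewrite !trmx_mul trmxK -!mulmxA; congr (_ *m _).
  by rewrite [in LHS]hQ -mulmxA mulmxKV.
apply: contraNneq Q0 => P0.
have -> : Q = invmx S^T *m (S^T *m Q *m S) *m invmx S.
  by rewrite !mulmxA mulVmx ?unitmx_tr // mul1mx mulmxK.
by rewrite P0 mulmx0 mul0mx.
Qed.

Lemma fixed_mul_add1_eq0 n (M P : 'M[F]_n.+1) :
  P = P^T * M -> P * (M + 1) = 0 -> P^T = - P /\ P * M = - P.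
Proof.
move=> hP h1.
have PM : P * M = - P by apply/eqP; rewrite -addr_eq0 -{2}(mulr1 P) -mulrDr h1.
have PT : P^T = M^T * P by rewrite {1}hP -mulmxE trmx_mul trmxK mulmxE.
split=> //; rewrite PT; apply/eqP; rewrite -addr_eq0; apply/eqP.
by rewrite {2}hP PT -mulrA PM mulrN addrN.
Qed.

End FixedPoints.

Section SkewFixedPoints.
Variable F : numFieldType.

Lemma fixed_of_neg1_Jordan_chain n (M : 'M[F]_n) (v w : 'rV_n) b :
  v *m M = - v -> w *m M = - w + b *: v ->
  let P := v^T *m w - w^T *m v - (b / 2) *: (v^T *m v) in P = P^T *m M.
Proof.
move=> hv hw /=.
rewrite !linearD !linearN !linearZ /= !trmx_mul !trmxK !mulmxDl.
rewrite ?mulNmx -?scalemxAl ?mulNmx -?scalemxAl.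
rewrite -!mulmxA hv hw mulmxDr !mulmxN -!scalemxAr.
by apply/matrixP => i j; rewrite !(mxE, big_ord1); field.
Qed.

Lemma fixed_of_neg1_double_root n (M : 'M[F]_n.+1) :
  ('X + 1) ^+ 2 %| char_poly M -> exists2 P : 'M_n.+1, P = P^T *m M & P != 0.
Proof.
rewrite -XsubCN1 => hd.
have e1 : eigenvalue M (-1).
  by rewrite eigenvalue_root_char -dvdp_XsubCl (dvdp_trans _ hd) // dvdp_mulIl.
have [v hv v0] := eigenvalueP e1.
have [S Su hSv] := @unitmx_usubmx _ n v v0.
have hS : usubmx S *m M = (-1) *: usubmx S by rewrite hSv hv.
have hT := similar_lblock_left_eigen Su hS.
have hc := char_poly_left_eigen Su hS.
set T := S *m M *m invmx S in hT hc.
have rD : root (char_poly (drsubmx T)) (-1).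
  rewrite -dvdp_XsubCl -(@dvdp_mul2l _ ('X - (-1)%:P)) ?polyXsubC_eq0 //.
  by rewrite -hc -expr2.
have [y hy y0] := eigenvalueP (etrans (eigenvalue_root_char _ _) rD).
pose e := row_mx 1%:M 0 : 'rV[F]_(1 + n).
pose w := row_mx 0 y : 'rV[F]_(1 + n).
have eT : e *m T = - e.
  rewrite hT mul_row_block !mul1mx !mul0mx !addr0 /e opp_row_mx oppr0.
  by rewrite raddfN.
have wT : w *m T = - w + (y *m dlsubmx T) 0 0 *: e.
  rewrite [in LHS]hT mul_row_block !mul0mx !add0r hy scaleN1r /w /e.
  rewrite opp_row_mx oppr0 scale_row_mx scaler0 add_row_mx addr0 add0r.
  by rewrite scalemx1 -mx11_scalar.
have hQ := fixed_of_neg1_Jordan_chain eT wT.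
set Q := _ - _ - _ *: _ in hQ.
have Q0 : Q != 0.
  have ee : e *m e^T = 1%:M.
    by rewrite /e tr_row_mx mul_row_col trmx1 mulmx1 linear0 mul0mx addr0.
  have ew : e *m w^T = 0.
    by rewrite /e /w tr_row_mx mul_row_col linear0 mulmx0 mul0mx addr0.
  have ey : rsubmx (e *m Q) = y.
    rewrite /Q !mulmxDr !mulmxN -!scalemxAr !mulmxA ee ew !mul1mx mul0mx subr0.
    rewrite /w /e scale_row_mx opp_row_mx add_row_mx row_mxKr scaler0 oppr0.
    by rewrite addr0.
  by apply: contraNneq y0 => Q0; rewrite -ey Q0 mulmx0 linear0.
have [hP P0] := fixed_similar Su hQ Q0.
by exists (S^T *m Q *m S).
Qed.

(* The rows [v] and [u] of [P] through a nonzero entry [P i j] are left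
   eigenvectors for -1; [u] is not a multiple of [v] because the diagonal of
   the skew matrix [P] vanishes, so -1 remains an eigenvalue after splitting
   off [v]. *)
Lemma skew_neg1_double_root n (M P : 'M[F]_(1 + n)) : P != 0 -> P^T = - P ->
  P *m M = - P -> ('X + 1) ^+ 2 %| char_poly M.
Proof.
move=> /matrix0Pn [i [j Pij]] PT PM.
have Pskew a b : P b a = - P a b by move/matrixP: PT => /(_ a b); rewrite !mxE.
have Pii a : P a a = 0.
  by have /eqP := Pskew a a; rewrite -addr_eq0 -mulr2n mulrn_eq0 => /eqP.
set v := row i P; set u := row j P.
have vM : v *m M = - v by rewrite -row_mul PM linearN.
have uM : u *m M = - u by rewrite -row_mul PM linearN.
have v0 : v != 0.
  apply: contraNneq Pij => v0; have -> : P i j = v 0 j by rewrite mxE.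
  by rewrite v0 mxE.
have [S Su hSv] := unitmx_usubmx v0.
have hS : usubmx S *m M = (-1) *: usubmx S by rewrite hSv vM scaleN1r.
have hT := similar_lblock_left_eigen Su hS.
have hc := char_poly_left_eigen Su hS.
set T := S *m M *m invmx S in hT hc.
set z := u *m invmx S.
have zT : z *m T = - z by rewrite /z /T !mulmxA mulmxKV // uM mulNmx.
move: zT; rewrite -[z]hsubmxK [in LHS]hT mul_row_block opp_row_mx.
move=> /eq_row_mx [_]; rewrite mulmx0 add0r => yD.
have y0 : rsubmx z != 0.
  apply/negP => /eqP y0.
  have uE : u = lsubmx z *m v.
    have -> : u = z *m S by rewrite /z mulmxKV.
    by rewrite -{1}[z]hsubmxK y0 -{1}[S]vsubmxK mul_row_col mul0mx addr0 hSv.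
  move/matrixP: uE => /(_ 0 i); rewrite !mxE big_ord1 !mxE Pii mulr0 Pskew.
  by move/eqP; rewrite oppr_eq0 (negPf Pij).
have rD : root (char_poly (drsubmx T)) (-1).
  rewrite -eigenvalue_root_char; apply/eigenvalueP.
  by exists (rsubmx z); rewrite // yD scaleN1r.
have [q hq] := factor_theorem _ _ rD.
by rewrite hc hq -XsubCN1 expr2 dvdp_mul // dvdp_mull.
Qed.

End SkewFixedPoints.

Section FixedPointsTrivial.
Variable K : numClosedFieldType.

Lemma fixed_eq0 n (M : 'M[K]_n.+1) :
  (forall l, eigenvalue M l -> l != -1 -> l != 0 -> ~ eigenvalue M l^-1) ->
  (eigenvalue M (-1) -> mup (-1) (char_poly M) = 1%N) ->
  forall P, P = P^T *m M -> P = 0.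
Proof.
move=> hi hii P; rewrite mulmxE => hP.
have hPc : P = M^T * P * M.
  by rewrite {1}hP -mulmxE; congr (_ *m _); rewrite {1}hP -mulmxE trmx_mul trmxK.
have [psi [d [hs hr hdvd hz]]] := char_poly_neg1_cofactor hii.
have PM1 : P * (M + 1) = 0.
  apply: (@mul_add1_eq0_coprime _ _ _ _ (revp d psi)).
    apply: (horner_mx_annihilator_revp hPc); first by rewrite hs.
    have /dvdpP [q ->] := hdvd.
    by rewrite rmorphM /= -char_poly_trmx Cayley_Hamilton mulr0.
  exact: coprimep_revp_char_poly.
have [PT PM] := fixed_mul_add1_eq0 hP PM1.
apply/eqP/negPn/negP => P0.
have PM' : P *m M = - P by rewrite mulmxE.
have hd := skew_neg1_double_root P0 PT PM'.
have ch0 : char_poly M != 0 by rewrite monic_neq0 ?char_poly_monic.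
have e1 : eigenvalue M (-1).
  rewrite eigenvalue_root_char -dvdp_XsubCl XsubCN1.
  by rewrite (dvdp_trans _ hd) // dvdp_mulIl.
have : (2 <= mup (-1) (char_poly M))%N by rewrite mup_geq // XsubCN1.
by rewrite hii.
Qed.

Lemma fixed_trivial_iff n (M : 'M[K]_n) :
  (forall P, P = P^T *m M -> P = 0) <->
  ((forall l, spectrum M l -> l != -1 -> l != 0 -> ~ spectrum M l^-1) /\
   (spectrum M (-1) -> simple_eigenvalue M (-1))).
Proof.
rewrite /spectrum /simple_eigenvalue /alg_mult.
case: n M => [|n] M.
  have noeig l : ~ eigenvalue M l.
    by rewrite eigenvalue_root_char /char_poly det_mx00 /root hornerC oner_eq0.
  by split=> [_|_ P _]; [split=> [l /noeig|/noeig] | exact: flatmx0].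
split=> [hP|[hi hii]]; last exact: fixed_eq0.
split=> [l el l1 l0 eli | e1].
  have [P hPM P0] := fixed_of_reciprocal_eigenvalues el eli l1 l0.
  by move/eqP: P0; apply; apply: hP.
have ch0 : char_poly M != 0 by rewrite monic_neq0 ?char_poly_monic.
apply/eqP; rewrite eqn_leq mup_leq // [(1 <= _)%N]mup_geq // expr1 dvdp_XsubCl.
rewrite -eigenvalue_root_char e1 andbT XsubCN1; apply/negP => hd.
have [P hPM P0] := fixed_of_neg1_double_root hd.
by move/eqP: P0; apply; apply: hP.
Qed.

End FixedPointsTrivial.

Section Stein.
Variables (F : fieldType) (m n : nat) (A B : 'M[F]_(m, n)).

Definition stein_map (X : 'M[F]_(m, n)) := X - A *m X^T *m B.

Fact stein_map_is_linear : linear stein_map.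
Proof.
move=> a X Y; rewrite /stein_map linearD linearZ /= mulmxDr mulmxDl.
by rewrite -scalemxAr -scalemxAl scalerBr opprD addrACA.
Qed.

HB.instance Definition _ := GRing.isLinear.Build F 'M[F]_(m, n) 'M[F]_(m, n) _
  stein_map stein_map_is_linear.

Lemma stein_unique_iff (C : 'M[F]_(m, n)) :
  (exists! X, X = A *m X^T *m B + C) <-> (forall X, X = A *m X^T *m B -> X = 0).
Proof.
split=> [[X0 [h0 hu]] Y hY | hh].
  have H : X0 + Y = A *m (X0 + Y)^T *m B + C.
    by rewrite {1}h0 {1}hY linearD /= mulmxDr mulmxDl addrAC.
  by apply: (addrI X0); rewrite addr0 -(hu _ H).
pose L := lin_mx stein_map.
have Lu : L \in unitmx.
  rewrite -row_free_unit -kermx_eq0; apply/eqP/row_matrixP => i; rewrite row0.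
  have : row i (kermx L) *m L = 0 by rewrite -row_mul mulmx_ker row0.
  rewrite /L mul_rV_lin => /eqP; rewrite mxvec_eq0 subr_eq0 => /eqP h.
  by apply/eqP; rewrite -vec_mx_eq0; apply/eqP; apply: hh.
pose X := vec_mx (mxvec C *m invmx L).
have hX : X = A *m X^T *m B + C.
  have : stein_map X = C.
    by rewrite /X -(mx_rV_lin stein_map) -/L mulmxKV // mxvecK.
  by rewrite /stein_map => <-; rewrite addrC subrK.
exists X; split=> // Y hY; apply/eqP; rewrite -subr_eq0; apply/eqP; apply: hh.
rewrite {1}hX {1}hY linearB /= mulmxBr mulmxBl.
by rewrite opprD addrACA subrr addr0.
Qed.

Lemma stein_homogeneous_iff :
  (forall X, X = A *m X^T *m B -> X = 0) <->
  (forall P : 'M_n, P = P^T *m (A^T *m B) -> P = 0).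
Proof.
split=> h.
  move=> P hP; have AP : A *m P = 0 by apply: h; rewrite trmx_mul -!mulmxA -hP.
  by rewrite hP !mulmxA -trmx_mul AP trmx0 !mul0mx.
move=> X hX.
have XB : X^T *m B = 0 by apply: h; rewrite {1}hX !trmx_mul !trmxK !mulmxA.
by rewrite hX -mulmxA XB mulmx0.
Qed.

End Stein.

Theorem theorem1 (R : realType) (m n : nat) (A B C : 'M[R[i]]_(m, n)) :
  (exists! X : 'M[R[i]]_(m, n), X = A *m X^T *m B + C) <->
  ((forall l : R[i], spectrum (A^T *m B) l -> l != -1 -> l != 0 ->
      ~ spectrum (A^T *m B) l^-1) /\
   (spectrum (A^T *m B) (-1) -> simple_eigenvalue (A^T *m B) (-1))).
Proof.
by rewrite stein_unique_iff stein_homogeneous_iff fixed_trivial_iff.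
Qed.
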